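(* Let $G=(V,E)$ be an undirected simple graph, let $k\ge 2$ be an integer, and let $e^*\in E$ satisfy $\tau_G(e^* )<k+1$. Then for every vertex $v\in V$, the edge $e^*$ is not contained in any connected component of the $k$-truss of the ego-network $G_{N(v)}$.
   Context: $N(v)$ is the set of neighbors of $v$ and $G_{N(v)}$ is the subgraph of $G$ induced by $N(v)$. For a subgraph $H$ and $e\in E(H)$, $\sup_H(e)$ is the number of triangles of $H$ containing $e$. The trussness of a subgraph $H$ with at least one edge is $\tau(H)=\min_{e\in E(H)}\sup_H(e)+2$, and the trussness of an edge $e$ in $G$ is $\tau_G(e)=\max\{\tau(H'):H'\subseteq G,\ e\in E(H')\}$. For an integer $k\ge 2$, the $k$-truss of a graph $H$ is the subgraph formed by the largest edge set $F\subseteq E(H)$ such that every edge of $F$ lies in at least $k-2$ triangles all of whose edges are in $F$. *)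

From mathcomp Require Import all_boot.
Set Implicit Arguments. Unset Strict Implicit. Unset Printing Implicit Defensive.

(* A simple undirected graph on a finite vertex type T is a symmetric,
   irreflexive relation adj; edges are 2-element vertex sets {u, w}. *)
Definition simple_graph (T : finType) (adj : rel T) : Prop :=
  symmetric adj /\ irreflexive adj.

Definition edges (T : finType) (adj : rel T) : {set {set T}} :=
  [set [set p.1; p.2] | p : T * T & adj p.1 p.2].

Definition nbhd (T : finType) (adj : rel T) (v : T) : {set T} :=
  [set u | adj v u].

Definition ego_edges (T : finType) (adj : rel T) (v : T) : {set {set T}} :=
  [set f in edges adj | f \subset nbhd adj v].

(* sup_H(f): number of triangles of the subgraph with edge set F containing f,
   i.e. number of vertices x outside f joined in F to both endpoints of f. *)
Definition sup (T : finType) (F : {set {set T}}) (f : {set T}) : nat :=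
  #|[set x | (x \notin f) && [forall y in f, [set y; x] \in F]]|.

(* tau(H) = min_{f in E(H)} sup_H(f) + 2   (meaningful for F nonempty;
   the initial value of the fold is sup at some element of F). *)
Definition tau (T : finType) (F : {set {set T}}) : nat :=
  (\big[minn/sup F (odflt set0 [pick f in F])]_(f in F) sup F f) + 2.

(* tau_G(e) = max { tau(H') : H' subgraph of G, e in E(H') }.
   Trussness of a subgraph depends only on its edge set. *)
Definition trussness (T : finType) (adj : rel T) (e : {set T}) : nat :=
  \max_(F : {set {set T}} | (F \subset edges adj) && (e \in F)) tau F.

Definition truss_ok (T : finType) (EH : {set {set T}}) (k : nat)
  (F : {set {set T}}) : bool :=
  (F \subset EH) && [forall f in F, k - 2 <= sup F f].

Definition is_ktruss (T : finType) (EH : {set {set T}}) (k : nat)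
  (F : {set {set T}}) : Prop :=
  truss_ok EH k F /\ forall F', truss_ok EH k F' -> F' \subset F.

(* Connected components of the graph with edge set F: the component of
   vertex x has as edges those edges of F with an endpoint connected to x. *)
Definition adjF (T : finType) (F : {set {set T}}) : rel T :=
  fun a b => [set a; b] \in F.

Definition component_edges (T : finType) (F : {set {set T}}) (x : T)
  : {set {set T}} :=
  [set f in F | [exists y in f, connect (adjF F) x y]].

(** Coning S off from v (adding the spokes {v,u} for
   all u covered by S) gives a subgraph of G containing e*, in which every old
   edge {a,b} gains the apex v, and every spoke {v,a} inherits the apexes of an
   edge {a,b} of S plus the apex b.  So every edge of the cone lies in at least
   k-1 of its triangles, and the cone witnesses that e* has trussness >= k+1. *)
From mathcomp Require Import all_boot.
From mathcomp Require Import zify.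
Set Implicit Arguments.
Unset Strict Implicit.
Unset Printing Implicit Defensive.

Definition apex (T : finType) (F : {set {set T}}) (f : {set T}) (x : T) :=
  (x \notin f) && [forall y in f, [set y; x] \in F].

Lemma supE (T : finType) (F : {set {set T}}) (f : {set T}) :
  sup F f = #|[set x | apex F f x]|.
Proof. by []. Qed.

Lemma apex_set2 (T : finType) (F : {set {set T}}) (a b x : T) :
  apex F [set a; b] x =
  [&& x != a, x != b, [set a; x] \in F & [set b; x] \in F].
Proof.
rewrite /apex in_set2 negb_or -andbA; congr [&& _, _ & _].
apply/forallP/andP => [H | [Ha Hb] y]; first split.
- by have := H a; rewrite set21.
- by have := H b; rewrite set22.
- by apply/implyP => /set2P[] ->.
Qed.

Lemma sup_ltn (T : finType) (F G : {set {set T}}) (f g : {set T}) (z : T) :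
  (forall x, apex F f x -> apex G g x) -> apex G g z -> ~~ apex F f z ->
  sup F f < sup G g.
Proof.
move=> FG Gz Fz; rewrite !supE.
have <- : #|z |: [set x | apex F f x]| = #|[set x | apex F f x]|.+1.
  by rewrite cardsU1 inE Fz.
apply/subset_leq_card/subsetP => x; rewrite !inE.
by case/orP => [/eqP -> | /FG].
Qed.

Lemma leq_tau (T : finType) (F : {set {set T}}) (m : nat) :
  F != set0 -> {in F, forall f, m <= sup F f} -> m + 2 <= tau F.
Proof.
move=> /set0Pn[f0 Ff0] Fm; rewrite /tau leq_add2r.
apply: (big_ind (fun n => m <= n)) => [||f /Fm //].
- by case: pickP => [f /Fm | /(_ f0)]; rewrite ?Ff0.
- by move=> p q mp mq; rewrite leq_min mp mq.
Qed.

Lemma leq_tau_trussness (T : finType) (adj : rel T) (F : {set {set T}})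
    (e : {set T}) :
  F \subset edges adj -> e \in F -> tau F <= trussness adj e.
Proof. by move=> FE eF; apply: (leq_bigmax_cond F); rewrite FE eF. Qed.

Lemma edgesP (T : finType) (adj : rel T) (f : {set T}) :
  f \in edges adj -> exists a b, f = [set a; b] /\ adj a b.
Proof. by case/imsetP => -[a b]; rewrite inE => ab ->; exists a, b. Qed.

Section Cone.

Variables (T : finType) (S : {set {set T}}) (v : T).
Hypothesis v_notin_cover : v \notin cover S.

Definition cone : {set {set T}} := S :|: [set [set v; u] | u in cover S].

Lemma cover_set2 (a b : T) :
  [set a; b] \in S -> (a \in cover S) && (b \in cover S).
Proof.
by move=> abS; apply/andP; split; apply/bigcupP; exists [set a; b];
  rewrite ?set21 ?set22.
Qed.

Lemma neq_cover_v (u : T) : u \in cover S -> u != v.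
Proof. by apply: contraTneq => ->. Qed.

Lemma spoke_in_cone (u : T) : u \in cover S -> [set v; u] \in cone.
Proof. by move=> uS; rewrite inE; apply/orP; right; apply/imsetP; exists u. Qed.

Lemma sub_cone : S \subset cone.
Proof. exact: subsetUl. Qed.

Lemma sup_cone_edge (a b : T) :
  [set a; b] \in S -> sup S [set a; b] < sup cone [set a; b].
Proof.
move=> abS; have /andP[aS bS] := cover_set2 abS.
apply: (sup_ltn (z := v)) => [x | |].
- rewrite !apex_set2 => /and4P[-> -> axS bxS].
  by rewrite !(subsetP sub_cone).
- rewrite apex_set2 ![v == _]eq_sym !neq_cover_v //=.
  by rewrite !(setUC _ [set v]) !spoke_in_cone.
- rewrite apex_set2; apply: contra v_notin_cover => /and4P[_ _ avS _].
  by case/andP: (cover_set2 avS).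
Qed.

Lemma sup_cone_spoke (a b : T) :
  a != b -> [set a; b] \in S -> sup S [set a; b] < sup cone [set v; a].
Proof.
move=> ab abS; have /andP[aS bS] := cover_set2 abS.
apply: (sup_ltn (z := b)) => [x | |].
- rewrite !apex_set2 => /and4P[xa _ axS _].
  have /andP[_ xS] := cover_set2 axS.
  by rewrite neq_cover_v // xa spoke_in_cone // (subsetP sub_cone).
- rewrite apex_set2 neq_cover_v // eq_sym ab spoke_in_cone //.
  by rewrite (subsetP sub_cone).
- by rewrite apex_set2 eqxx !andbF.
Qed.

Lemma sup_cone_lb (m : nat) :
  (forall f, f \in S ->
     exists a b, [/\ a != b, f = [set a; b] & m <= sup S f]) ->
  {in cone, forall g, m < sup cone g}.
Proof.
move=> Sm g; rewrite inE => /orP[/[dup] gS /Sm[a [b [_ gE mg]]] | ].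
  by apply: leq_ltn_trans mg _; rewrite gE sup_cone_edge -?gE.
case/imsetP => u /bigcupP[f /[dup] fS /Sm[a [b [ab fE mf]]]].
rewrite fE in fS mf * => /set2P[] -> ->.
  exact: leq_ltn_trans mf (sup_cone_spoke ab fS).
rewrite setUC in fS mf; rewrite eq_sym in ab.
exact: leq_ltn_trans mf (sup_cone_spoke ab fS).
Qed.

End Cone.

Lemma ego_edgesP (T : finType) (adj : rel T) (v : T) (f : {set T}) :
  irreflexive adj -> f \in ego_edges adj v ->
  exists a b, [/\ a != b, f = [set a; b], adj v a & adj v b].
Proof.
move=> irr; rewrite inE => /andP[/edgesP[a [b [-> ab]]] /subsetP sub].
have := sub a (set21 a b); have := sub b (set22 a b); rewrite !inE => vb va.
by exists a, b; split=> //; apply: contraTneq ab => ->; rewrite irr.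
Qed.

Lemma cone_ego_edges (T : finType) (adj : rel T) (v : T) (S : {set {set T}}) :
  irreflexive adj -> S \subset ego_edges adj v ->
  v \notin cover S /\ cone S v \subset edges adj.
Proof.
move=> irr /subsetP Sego; split.
  apply/bigcupP => -[f /Sego /(ego_edgesP irr)[a [b [_ -> va vb]]]].
  by case/set2P => vE; [move: va | move: vb]; rewrite -vE irr.
apply/subsetP => g; rewrite inE => /orP[/Sego | ].
  by rewrite inE => /andP[].
case/imsetP => u /bigcupP[f /Sego fE uf] ->; apply/imsetP; exists (v, u) => //.
move: fE; rewrite !inE => /andP[_ /subsetP /(_ u uf)].
by rewrite inE.
Qed.

Theorem mainTheorem4 (T : finType) (adj : rel T) (k : nat) (estar : {set T}) :
  simple_graph adj -> 2 <= k ->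
  estar \in edges adj ->
  trussness adj estar < k + 1 ->
  forall (v : T) (Ftruss : {set {set T}}),
    is_ktruss (ego_edges adj v) k Ftruss ->
    forall x : T, estar \notin component_edges Ftruss x.
Proof.
move=> [_ irr] k2 _ tr_lt v S [/andP[Sego /forallP Sk] _] x.
apply/negP; rewrite inE => /andP[eS _].
have [vS coneE] := cone_ego_edges irr Sego.
have Sm f : f \in S ->
    exists a b, [/\ a != b, f = [set a; b] & k - 2 <= sup S f].
  move=> fS; have [a [b [ab fE _ _]]] := ego_edgesP irr (subsetP Sego f fS).
  by exists a, b; split=> //; move/implyP: (Sk f); apply.
have e_cone : estar \in cone S v by rewrite (subsetP (sub_cone S v)).
have tau_cone : (k - 2).+1 + 2 <= tau (cone S v).
  by apply: leq_tau; [apply/set0Pn; exists estar | exact: (sup_cone_lb vS Sm)].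
have := leq_trans tau_cone (leq_tau_trussness coneE e_cone); lia.
Qed.
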